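(* Assume $2k+1 \le n/4$. For every randomized algorithm that makes at most $n/4$ comparison queries and outputs a set of $2k+1$ elements, there exists an instance (with $n$ elements, $k$ of them corrupted) on which the probability that the output set contains the uncorrupted maximum is at most $3/4$.
   Context: Model: there are $n$ elements $x_1,\dots,x_n$, exactly $k$ of which are corrupted (unknown to the algorithm). For every pair of distinct elements the comparison graph (a tournament) specifies which one is larger. The comparison graph restricted to the $n-k$ uncorrupted elements is acyclic; comparisons involving corrupted elements may be oriented arbitrarily. The uncorrupted maximum is the uncorrupted element larger than every other uncorrupted element. An algorithm knows $n$ and $k$, may query the orientation of any pair (a comparison query), and outputs a set of elements. *)

From HB Require Import structures.
From mathcomp Require Import all_boot all_order all_algebra.
Set Implicit Arguments. Unset Strict Implicit. Unset Printing Implicit Defensive.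
Import Order.TTheory GRing.Theory Num.Theory.

(* Elements are 'I_n.  A comparison graph is a relation [T : rel 'I_n];
   [T x y] means "x is larger than y". *)

Definition tournament (n : nat) (T : rel 'I_n) : Prop :=
  (forall x, ~~ T x x) /\ (forall x y, x != y -> T x y = ~~ T y x).

Definition restr (n : nat) (T : rel 'I_n) (C : {set 'I_n}) : rel 'I_n :=
  fun x y => [&& x \notin C, y \notin C & T x y].

Definition acyclic_rel (n : nat) (E : rel 'I_n) : Prop :=
  forall x y, E x y -> ~~ connect E y x.

Definition instance (n k : nat) (T : rel 'I_n) (C : {set 'I_n}) : Prop :=
  [/\ tournament T, #|C| = k & acyclic_rel (restr T C)].

Definition uncorrupted_max (n : nat) (T : rel 'I_n) (C : {set 'I_n}) (x : 'I_n)
  : bool :=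
  (x \notin C) && [forall y, ((y \notin C) && (y != x)) ==> T x y].

(* Deterministic comparison-query algorithms as decision trees:
   [Query i j t1 t2] queries the orientation of pair (i,j) and continues with
   t1 if i is larger than j, with t2 otherwise; [Leaf S] outputs S. *)
Inductive dtree (n : nat) : Type :=
| Leaf of {set 'I_n}
| Query of 'I_n & 'I_n & dtree n & dtree n.

Fixpoint run (n : nat) (t : dtree n) (T : rel 'I_n) : {set 'I_n} * nat :=
  match t with
  | Leaf out => (out, 0%N)
  | Query i j t1 t2 =>
      let r := if T i j then run t1 T else run t2 T in (r.1, r.2.+1)
  end.

(* A randomized algorithm is a probability distribution P on a finite
   randomness space Omega together with a deterministic algorithm A w for each
   random outcome w. *)
Local Open Scope ring_scope.
Definition is_distr (R : realFieldType) (Omega : finType) (P : Omega -> R) : Prop :=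
  (forall w, 0 <= P w) /\ \sum_(w : Omega) P w = 1.

Definition success_prob (R : realFieldType) (n : nat) (Omega : finType)
  (P : Omega -> R) (A : Omega -> dtree n) (T : rel 'I_n) (C : {set 'I_n}) : R :=
  \sum_(w : Omega | [exists x, uncorrupted_max T C x && (x \in (run (A w) T).1)])
     P w.

From HB Require Import structures.
From mathcomp Require Import all_boot all_order all_algebra.
From mathcomp Require Import zify.
Import Order.TTheory GRing.Theory Num.Theory.

Set Implicit Arguments.
Unset Strict Implicit.
Unset Printing Implicit Defensive.

(* Yao-style argument.  Let T_m be the linear order of the elements by index,
   except that m is moved to the top, and corrupt k elements other than m, so
   that m is the uncorrupted maximum.  On every T_m with m not queried, a
   deterministic algorithm behaves as on the plain index order; hence it
   succeeds on T_m for at most 2q + (2k+1) <= n/2 + n/4 values of m, q being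
   its number of queries on the index order.  Averaging over the randomness,
   the success probabilities on the T_m sum to at most 3n/4, so one of them
   is at most 3/4. *)

Lemma homo_connect_leq (T : finType) (E : rel T) (f : T -> nat) :
  (forall x y, E x y -> f x < f y) -> forall x y, connect E x y -> f x <= f y.
Proof.
move=> f_homo x y /connectP [p p_path ->]; elim: p x p_path => //= z p IH x.
by case/andP=> /f_homo/ltnW xz /IH; apply: leq_trans.
Qed.

(* Elements of smaller rank are larger. *)
Definition rank_rel (n : nat) (f : 'I_n -> nat) : rel 'I_n :=
  fun x y => f x < f y.

Lemma rank_rel_instance (n k : nat) (f : 'I_n -> nat) (C : {set 'I_n}) :
  injective f -> #|C| = k -> instance k (rank_rel f) C.
Proof.
move=> f_inj C_card; split=> //.
  split=> [x|x y xy]; first by rewrite /rank_rel ltnn.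
  by rewrite /rank_rel ltn_neqAle (inj_eq f_inj) xy -leqNgt.
move=> x y /and3P[_ _]; rewrite /rank_rel => fxy.
apply/negP => /(homo_connect_leq (f := f)) fyx.
have : f y <= f x by apply: fyx => a b /and3P[].
by rewrite leqNgt fxy.
Qed.

Definition lift_to_top (n : nat) (m x : 'I_n) : nat :=
  if x == m then 0 else (val x).+1.

Lemma lift_to_top_inj (n : nat) (m : 'I_n) : injective (lift_to_top m).
Proof.
move=> x y; rewrite /lift_to_top.
by case: eqP => [->|_]; case: eqP => [->|_] // [] /val_inj.
Qed.

Lemma rank_rel_lift_to_top (n : nat) (m x y : 'I_n) :
  x != m -> y != m -> rank_rel (lift_to_top m) x y = rank_rel val x y.
Proof. by rewrite /rank_rel /lift_to_top => /negbTE-> /negbTE->. Qed.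

Definition others_prefix (n k : nat) (m : 'I_n) : {set 'I_n} :=
  [set x in take k (enum [set~ m])].

Lemma others_prefix_card (n k : nat) (m : 'I_n) :
  k < n -> #|others_prefix k m| = k.
Proof.
move=> k_lt_n; rewrite cardsE (card_uniqP _) ?take_uniq ?enum_uniq //.
by rewrite size_take -cardE cardsC1 card_ord; case: ltnP => // ?; lia.
Qed.

Lemma others_prefixN (n k : nat) (m : 'I_n) : m \notin others_prefix k m.
Proof. by rewrite inE; apply/negP => /mem_take; rewrite mem_enum !inE eqxx. Qed.

Lemma uncorrupted_max_lift_to_top (n k : nat) (m x : 'I_n) :
  uncorrupted_max (rank_rel (lift_to_top m)) (others_prefix k m) x = (x == m).
Proof.
apply/idP/eqP => [/andP[_ /forallP/(_ m)] | ->].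
  rewrite others_prefixN /rank_rel /lift_to_top eqxx ltn0 implybF eq_sym.
  by move=> /negPn/eqP.
rewrite /uncorrupted_max others_prefixN; apply/forallP => y; apply/implyP.
by case/andP=> _ ym; rewrite /rank_rel /lift_to_top eqxx (negbTE ym).
Qed.

Fixpoint queried (n : nat) (t : dtree n) (T : rel 'I_n) : seq 'I_n :=
  match t with
  | Leaf _ => [::]
  | Query i j t1 t2 => i :: j :: queried (if T i j then t1 else t2) T
  end.

Lemma size_queried (n : nat) (t : dtree n) (T : rel 'I_n) :
  size (queried t T) = 2 * (run t T).2.
Proof.
by elim: t => //= i j t1 IH1 t2 IH2; case: (T i j); rewrite ?IH1 ?IH2 mulnS.
Qed.

Lemma run_eq_on_queried (n : nat) (t : dtree n) (T T' : rel 'I_n) :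
  {in queried t T &, T =2 T'} -> run t T = run t T'.
Proof.
elim: t => //= i j t1 IH1 t2 IH2 TT'.
have <- : T i j = T' i j by apply: TT'; rewrite !inE eqxx ?orbT.
by case: (T i j) TT' => TT'; [rewrite IH1 | rewrite IH2] => // x y x_in y_in;
  apply: TT'; rewrite !in_cons ?x_in ?y_in !orbT.
Qed.

Lemma run_lift_to_top (n : nat) (t : dtree n) (m : 'I_n) :
  m \notin queried t (rank_rel val) ->
  run t (rank_rel (lift_to_top m)) = run t (rank_rel val).
Proof.
move=> m_fresh; symmetry; apply: run_eq_on_queried => x y x_in y_in.
by rewrite rank_rel_lift_to_top //; apply: contraNneq m_fresh => <-.
Qed.

Lemma card_top_in_output (n : nat) (t : dtree n) :
  #|[set m | m \in (run t (rank_rel (lift_to_top m))).1]| <=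
  2 * (run t (rank_rel val)).2 + #|(run t (rank_rel val)).1|.
Proof.
set Q := queried t (rank_rel val); set out := (run t (rank_rel val)).1.
apply: (@leq_trans #|[set x in Q] :|: out|).
  apply/subset_leq_card/subsetP => m; rewrite !inE.
  by case: (boolP (m \in Q)) => // /run_lift_to_top->.
rewrite -size_queried -/Q (leq_trans (leq_card_setU _ _)) //.
by rewrite leq_add2r cardsE card_size.
Qed.

Local Open Scope ring_scope.

Lemma success_prob_lift_to_top (R : realFieldType) (n k : nat) (Omega : finType)
    (P : Omega -> R) (A : Omega -> dtree n) (m : 'I_n) :
  let T := rank_rel (lift_to_top m) in
  success_prob P A T (others_prefix k m) = \sum_(w | m \in (run (A w) T).1) P w.
Proof.
apply: eq_bigl => w; apply/existsP/idP => [[x]|m_in].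
  by rewrite uncorrupted_max_lift_to_top => /andP[/eqP->].
by exists m; rewrite uncorrupted_max_lift_to_top eqxx.
Qed.

Lemma exists_prob_le_of_card_le (R : realFieldType) (I Omega : finType)
    (P : Omega -> R) (E : I -> pred Omega) (a : R) :
  is_distr P -> (0 < #|I|)%N ->
  (forall w, #|[set i | E i w]|%:R <= a * #|I|%:R) ->
  exists i, \sum_(w | E i w) P w <= a.
Proof.
move=> [P_ge0 P_sum1] I_gt0 cardE.
have sum_le : \sum_i \sum_(w | E i w) P w <= a * #|I|%:R.
  rewrite (exchange_big_dep predT) //=.
  apply: (@le_trans _ _ (\sum_w P w * (a * #|I|%:R))); last first.
    by rewrite -mulr_suml P_sum1 mul1r.
  apply: ler_sum => w _.
  rewrite (eq_bigl [in [set i | E i w]]); last by move=> i; rewrite inE.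
  by rewrite sumr_const -[P w *+ _]mulr_natr; apply: ler_wpM2l.
have [i small|large] := pickP (fun i => \sum_(w | E i w) P w <= a).
  by exists i.
have [i0 _] := card_gt0P I_gt0.
have : \sum_(i : I) a < \sum_i \sum_(w | E i w) P w.
  apply: ltr_sum => [|i _]; last by rewrite ltNge large.
  by apply/hasP; exists i0; rewrite ?mem_index_enum.
by rewrite sumr_const -mulr_natr => /lt_le_trans/(_ sum_le); rewrite ltxx.
Qed.

Theorem mainTheorem7 (R : realFieldType) (n k : nat) :
  (4 * (2 * k + 1) <= n)%N ->
  forall (Omega : finType) (P : Omega -> R) (A : Omega -> dtree n),
    is_distr P ->
    (forall w T C, @instance n k T C ->
       (4 * (run (A w) T).2 <= n)%N /\ #|(run (A w) T).1| = (2 * k + 1)%N) ->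
    exists T C, @instance n k T C /\
      (success_prob P A T C <= 3%:R / 4%:R)%R.
Proof.
move=> n_large Omega P A P_distr A_spec.
have k_lt_n : (k < n)%N by lia.
pose T (m : 'I_n) := rank_rel (lift_to_top m).
pose C (m : 'I_n) := others_prefix k m.
have inst m : instance k (T m) (C m).
  exact: rank_rel_instance (@lift_to_top_inj n m) (others_prefix_card m k_lt_n).
have base_inst : instance k (rank_rel val) (C (Ordinal k_lt_n)).
  exact: rank_rel_instance val_inj (others_prefix_card _ k_lt_n).
have [|w|m small] :=
  @exists_prob_le_of_card_le R _ _ P (fun m w => m \in (run (A w) (T m)).1)
    (3%:R / 4%:R) P_distr; first by rewrite card_ord; lia.
  have [queries_le out_card] := A_spec w _ _ base_inst.
  have := card_top_in_output (A w); rewrite out_card card_ord => found_le.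
  by rewrite mulrAC ler_pdivlMr ?ltr0n // -!natrM ler_nat /T; lia.
by exists (T m), (C m); split; last by rewrite success_prob_lift_to_top.
Qed.
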